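(* $\deg_{\rm top}(R)=\deg_{\rm top}(\mathcal R)=8$.
   Context: The topological degree $\deg_{\rm top}$ of a rational map $\mathbb{CP}^2\dashrightarrow\mathbb{CP}^2$ is the number of preimages of a generic point. $R[U:V:W]=[(U^2+V^2)^2:V^2(U+W)^2:(V^2+W^2)^2]$ and $\mathcal R[Z:T:Y]=[Z^2(Z^2+T^2)^2:T^2(Z^2+Y^2)^2:(Z^2+T^2)(T^2Z^2+Y^4)]$ (in affine coordinates $z=Z/Y$, $t=T/Y$, $\mathcal R(z,t)=\big(\frac{z^2+t^2}{z^{-2}+t^2},\frac{z^2+z^{-2}+2}{z^2+z^{-2}+t^2+t^{-2}}\big)$). *)

From HB Require Import structures.
From mathcomp Require Import all_boot all_order all_algebra.
From mathcomp Require Import complex.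
From mathcomp Require Import Rstruct.
From mathcomp Require Import mpoly.
From Stdlib Require Rdefinitions.

Set Implicit Arguments.
Unset Strict Implicit.
Unset Printing Implicit Defensive.

Import Order.TTheory GRing.Theory Num.Theory.
Local Open Scope ring_scope.
Local Open Scope complex_scope.

Notation C := (Rdefinitions.R)[i].

(* Points of C^3 (homogeneous coordinates of CP^2). *)
Definition C3 : Type := (C * C * C)%type.

Definition nonzero3 (u : C3) : Prop :=
  u.1.1 <> 0 \/ u.1.2 <> 0 \/ u.2 <> 0.

Definition proj_eq (u v : C3) : Prop :=
  exists lam : C, lam <> 0 /\
    u.1.1 = lam * v.1.1 /\ u.1.2 = lam * v.1.2 /\ u.2 = lam * v.2.

Definition coords (u : C3) : 'I_3 -> C :=
  fun i => nth 0 [:: u.1.1; u.1.2; u.2] i.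

(* The rational map CP^2 --> CP^2 given by a triple F of homogeneous
   polynomials of a common degree (here given as a function C^3 -> C^3).
   A point [p] (p nonzero) lies in the domain of definition iff F p is
   nonzero; then its image is [F p]. *)
Definition in_fiber (F : C3 -> C3) (q p : C3) : Prop :=
  nonzero3 p /\ nonzero3 (F p) /\ proj_eq (F p) q.

Definition fiber_card (F : C3 -> C3) (q : C3) (k : nat) : Prop :=
  exists ps : seq C3,
    size ps = k /\
    (forall p, p \in ps -> in_fiber F q p) /\
    (forall i j : nat, (i < k)%N -> (j < k)%N -> i <> j ->
        ~ proj_eq (nth (0, 0, 0) ps i) (nth (0, 0, 0) ps j)) /\
    (forall p, in_fiber F q p -> exists2 p', p' \in ps & proj_eq p p').

(* deg_top F = k : the number of preimages of a generic point is k, i.e.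
   there is a nonzero polynomial h such that every point [q] with h(q) <> 0
   has exactly k preimages. *)
Definition deg_top_eq (F : C3 -> C3) (k : nat) : Prop :=
  exists h : mpoly.mpoly 3 C, h != 0 /\
    forall q : C3, nonzero3 q -> mpoly.meval (coords q) h != 0 ->
      fiber_card F q k.

Definition Rmap (x : C3) : C3 :=
  let: (U, V, W) := x in
  ((U ^+ 2 + V ^+ 2) ^+ 2, V ^+ 2 * (U + W) ^+ 2, (V ^+ 2 + W ^+ 2) ^+ 2).

Definition calRmap (x : C3) : C3 :=
  let: (Z, T, Y) := x in
  (Z ^+ 2 * (Z ^+ 2 + T ^+ 2) ^+ 2,
   T ^+ 2 * (Z ^+ 2 + Y ^+ 2) ^+ 2,
   (Z ^+ 2 + T ^+ 2) * (T ^+ 2 * Z ^+ 2 + Y ^+ 4)).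

(* Both maps factor through the squaring map [sqr3].  First, [Rmap = sqr3 \o Qmap]
   with [Qmap (U, V, W) = (U^2 + V^2, V (U + W), V^2 + W^2)].  A generic point
   [a^2 : b^2 : c^2] has the four square roots [a : +-b : +-c] up to proportionality,
   and [Qmap] is two-to-one over each of them: a preimage is determined by
   [s = U + W], which satisfies [(s^2 - x - z)^2 = 4 (x z - y^2)] and is fixed up
   to sign, i.e. up to proportionality.  Second, [calRmap = Gmap \o sqr3] with
   [Gmap (A, B, D) = (A (A + B)^2, B (A + D)^2, (A + B) (A B + D^2))].  In the chart
   [D = 1], [Gmap] is two-to-one over a generic [a : b : c] ([A] is a root of a
   quadratic, [B] a rational function of [A]), and each of the two points has the
   four square roots [+-sqrt A : +-sqrt B : 1].  The eight preimages are pairwise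
   distinct and exhaust the fiber off the zero set of a product of coordinates
   and discriminants. *)

From HB Require Import structures.
From mathcomp Require Import all_boot all_order all_algebra complex Rstruct.
From mathcomp Require Import ring mpoly.
Import Order.TTheory GRing.Theory Num.Theory.
Set Implicit Arguments.
Unset Strict Implicit.
Unset Printing Implicit Defensive.

Local Open Scope ring_scope.

Definition scale3 (l : C) (p : C3) : C3 := (l * p.1.1, l * p.1.2, l * p.2).

Definition sqr3 (p : C3) : C3 := (p.1.1 ^+ 2, p.1.2 ^+ 2, p.2 ^+ 2).

Lemma proj_eq_scale (u v : C3) :
  proj_eq u v <-> exists2 l, l != 0 & u = scale3 l v.
Proof.
split=> [[l [/eqP l0 [h1 [h2 h3]]]] | [l /eqP l0 ->]]; last by exists l.
by exists l => //; case: u h1 h2 h3 => [[U V] W] /= -> -> ->.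
Qed.

Lemma scale3M a b p : scale3 a (scale3 b p) = scale3 (a * b) p.
Proof. by rewrite /scale3 /= !mulrA. Qed.

Lemma scale3K l p : l != 0 -> scale3 l (scale3 l^-1 p) = p.
Proof. by case: p => [[U V] W] l0; rewrite /scale3 /= !mulVKf. Qed.

Lemma sqr_eq_sign (u v : C) :
  u ^+ 2 = v ^+ 2 -> exists e : bool, u = (-1) ^+ e * v.
Proof.
move/eqP; rewrite eqf_sqr => /orP [/eqP -> | /eqP ->].
- by exists false; rewrite mul1r.
- by exists true; rewrite mulN1r.
Qed.

Lemma sqr_eq_sign_sqrt (u v : C) :
  u ^+ 2 = v -> exists e : bool, u = (-1) ^+ e * sqrtC v.
Proof. by move=> h; apply: sqr_eq_sign; rewrite sqrtCK. Qed.

Lemma sign_sqrtCK (e : bool) (v : C) : ((-1) ^+ e * sqrtC v) ^+ 2 = v.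
Proof. by rewrite exprMn sqrr_sign mul1r sqrtCK. Qed.

Lemma signr_mulIf {e e' : bool} {v : C} : v != 0 ->
  (-1) ^+ e * v = (-1) ^+ e' * v -> e = e'.
Proof. by move=> v0 /(mulIf v0) /signr_inj. Qed.

Lemma fiber_card_param F q (T : finType) (f : T -> C3) :
  (forall t, in_fiber F q (f t)) ->
  (forall t t', proj_eq (f t) (f t') -> t = t') ->
  (forall p, in_fiber F q p -> exists t, proj_eq p (f t)) ->
  fiber_card F q #|T|.
Proof.
move=> f_fiber f_inj f_onto; have ts_uniq := enum_uniq T.
exists (map f (enum T)); split; first by rewrite size_map cardE.
split; first by move=> p /mapP [t _ ->].
split.
  move=> i j; rewrite cardE => i_lt j_lt ij.
  have t0 : T by case: (enum T) i_lt => // t.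
  rewrite (nth_map t0 _ _ i_lt) (nth_map t0 _ _ j_lt) => /f_inj /eqP.
  by rewrite nth_uniq // => /eqP.
move=> p /f_onto [t ht]; exists (f t) => //.
by apply: map_f; rewrite mem_enum.
Qed.

Definition Qmap (p : C3) : C3 :=
  let: (U, V, W) := p in (U ^+ 2 + V ^+ 2, V * (U + W), V ^+ 2 + W ^+ 2).

Lemma Rmap_sqr3 p : Rmap p = sqr3 (Qmap p).
Proof. by case: p => [[U V] W]; rewrite /sqr3 /=; congr (_, _, _); ring. Qed.

Lemma Qmap_scale l p : Qmap (scale3 l p) = scale3 (l ^+ 2) (Qmap p).
Proof. by case: p => [[U V] W]; rewrite /scale3 /=; congr (_, _, _); ring. Qed.

(* The preimage of [(x, y, z)] under [Qmap] with [U + W = s]. *)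
Definition Qsection (x y z s : C) : C3 :=
  ((s + (x - z) / s) / 2, y / s, (s - (x - z) / s) / 2).

Lemma Qsection_sum x y z s : (Qsection x y z s).1.1 + (Qsection x y z s).2 = s.
Proof. by rewrite /Qsection /=; set d := (x - z) / s; field. Qed.

Lemma Qsection_sign x y z s (e : bool) : s != 0 ->
  Qsection x y z ((-1) ^+ e * s) = scale3 ((-1) ^+ e) (Qsection x y z s).
Proof.
move=> s0; rewrite /Qsection /scale3 /=.
by case: e; congr (_, _, _); field; rewrite ?s0.
Qed.

Lemma Qmap_Qsection x y z s d : s != 0 -> d ^+ 2 = x * z - y ^+ 2 ->
  s ^+ 2 = x + z + 2 * d -> Qmap (Qsection x y z s) = (x, y, z).
Proof.
move=> s0 hd hs.
have hy : y ^+ 2 = x * z - d ^+ 2 by rewrite hd; ring.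
have hdd : d = (s ^+ 2 - x - z) / 2 by rewrite hs; field.
rewrite /Qmap /Qsection /=; congr (_, _, _); last 2 first.
- by field.
all: rewrite [(y / s) ^+ 2]expr_div_n hy hdd; field; by rewrite ?s0.
Qed.

Lemma Qsection_Qmap {U V W x y z : C} : Qmap (U, V, W) = (x, y, z) -> U + W != 0 ->
  (U, V, W) = Qsection x y z (U + W) /\
  ((U + W) ^+ 2 - x - z) ^+ 2 = 4 * (x * z - y ^+ 2).
Proof.
move=> [<- <- <-] s0; split; last by ring.
by rewrite /Qsection; congr (_, _, _); field; rewrite ?s0.
Qed.

(* The two values of [U + W] over [(x, y, z)], indexed by the sign of the
   square root of [x z - y^2]. *)
Definition Qroot (x y z : C) (r : bool) : C :=
  sqrtC (x + z + 2 * ((-1) ^+ r * sqrtC (x * z - y ^+ 2))).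

Section QmapFiber.

Variables x y z : C.
Hypothesis y_neq0 : y != 0.
Hypothesis disc_neq0 : (x - z) ^+ 2 + 4 * y ^+ 2 != 0.

Lemma Qroot_neq0 r : Qroot x y z r != 0.
Proof.
rewrite sqrtC_eq0; apply: contra disc_neq0 => /eqP s0.
set w := sqrtC _ in s0.
have y2 : y ^+ 2 = x * z - w ^+ 2 by rewrite sqrtCK; ring.
have -> : (x - z) ^+ 2 + 4 * y ^+ 2 =
    (x + z + 2 * ((-1) ^+ r * w)) * (x + z + 2 * ((-1) ^+ (~~ r) * w)).
  by rewrite y2; case: r {s0} => /=; ring.
by rewrite s0 mul0r.
Qed.

Lemma Qmap_Qroot r : Qmap (Qsection x y z (Qroot x y z r)) = (x, y, z).
Proof.
apply: (@Qmap_Qsection _ _ _ _ ((-1) ^+ r * sqrtC (x * z - y ^+ 2))).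
- exact: Qroot_neq0.
- exact: sign_sqrtCK.
- by rewrite sqrtCK.
Qed.

Lemma Qmap_eq_Qroot p : Qmap p = (x, y, z) ->
  exists (r e : bool), p = scale3 ((-1) ^+ e) (Qsection x y z (Qroot x y z r)).
Proof.
case: p => [[U V] W] hQ.
have s0 : U + W != 0.
  by apply: contra y_neq0 => /eqP s0; move: hQ => [_ <- _]; rewrite s0 mulr0.
have [-> hs] := Qsection_Qmap hQ s0.
set s := U + W in hs *.
have [r hr] : exists r : bool,
    s ^+ 2 - x - z = (-1) ^+ r * (2 * sqrtC (x * z - y ^+ 2)).
  by apply: sqr_eq_sign; rewrite hs exprMn sqrtCK; ring.
have [e ->] : exists e : bool, s = (-1) ^+ e * Qroot x y z r.
  apply: sqr_eq_sign_sqrt.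
  have -> : s ^+ 2 = (s ^+ 2 - x - z) + x + z by ring.
  by rewrite hr; ring.
by exists r, e; rewrite Qsection_sign ?Qroot_neq0.
Qed.

End QmapFiber.

Section RmapFiber.

Variables al be ga : C.
Hypotheses (al_neq0 : al != 0) (be_neq0 : be != 0) (ga_neq0 : ga != 0).
Hypothesis det_neq0 : al ^+ 2 * ga ^+ 2 - be ^+ 4 != 0.
Hypothesis disc_neq0 :
  (al ^+ 2 + ga ^+ 2 + 4 * be ^+ 2) ^+ 2 - 4 * al ^+ 2 * ga ^+ 2 != 0.

(* [Qmap] sends [Rpoint (e2, e3, r)] to [(al, +-be, +-ga)]; [r] chooses
   between the two points of that fiber of [Qmap]. *)
Definition Rpoint (t : bool * bool * bool) : C3 :=
  let y := (-1) ^+ t.1.1 * be in let z := (-1) ^+ t.1.2 * ga in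
  Qsection al y z (Qroot al y z t.2).

Section Signs.

Variables e2 e3 : bool.
Let y := (-1) ^+ e2 * be.
Let z := (-1) ^+ e3 * ga.

Lemma signed_be_neq0 : y != 0.
Proof. by rewrite mulf_neq0 ?signr_eq0. Qed.

Lemma signed_det_neq0 : al * z - y ^+ 2 != 0.
Proof.
apply: contra det_neq0 => /eqP d0.
have -> : al ^+ 2 * ga ^+ 2 - be ^+ 4 =
    - (al * z - y ^+ 2) * (al * ((-1) ^+ (~~ e3) * ga) - y ^+ 2).
  by rewrite /y /z; case: e2 e3 {d0} => [] [] /=; ring.
by rewrite d0 oppr0 mul0r.
Qed.

Lemma signed_disc_neq0 : (al - z) ^+ 2 + 4 * y ^+ 2 != 0.
Proof.
apply: contra disc_neq0 => /eqP d0.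
have -> : (al ^+ 2 + ga ^+ 2 + 4 * be ^+ 2) ^+ 2 - 4 * al ^+ 2 * ga ^+ 2 =
    ((al - z) ^+ 2 + 4 * y ^+ 2) * ((al - (-1) ^+ (~~ e3) * ga) ^+ 2 + 4 * y ^+ 2).
  by rewrite /y /z; case: e2 e3 {d0} => [] [] /=; ring.
by rewrite d0 mul0r.
Qed.

End Signs.

Lemma Qmap_Rpoint e2 e3 r :
  Qmap (Rpoint (e2, e3, r)) = (al, (-1) ^+ e2 * be, (-1) ^+ e3 * ga).
Proof.
by apply: Qmap_Qroot; rewrite ?signed_be_neq0 ?signed_disc_neq0.
Qed.

Lemma Rpoint_in_fiber t : in_fiber Rmap (al ^+ 2, be ^+ 2, ga ^+ 2) (Rpoint t).
Proof.
case: t => [[e2 e3] r]; have hQ := Qmap_Rpoint e2 e3 r.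
have hR : Rmap (Rpoint (e2, e3, r)) = (al ^+ 2, be ^+ 2, ga ^+ 2).
  by rewrite Rmap_sqr3 hQ /sqr3 /= !exprMn !sqrr_sign !mul1r.
split; last split; last first.
- by rewrite hR; apply/proj_eq_scale; exists 1; rewrite ?oner_eq0 // /scale3 !mul1r.
- by rewrite hR; left; apply/eqP; rewrite expf_neq0.
case: (Rpoint _) hQ => [[U V] W] [hx _ _]; rewrite /nonzero3 /=.
case: (eqVneq U 0) => [U0 | /eqP]; last by left.
right; left; apply/eqP; apply: contra al_neq0 => /eqP V0.
by rewrite -hx U0 V0 expr0n add0r.
Qed.

Lemma Rpoint_inj t t' : proj_eq (Rpoint t) (Rpoint t') -> t = t'.
Proof.
case: t t' => [[e2 e3] r] [[e2' e3'] r'] /proj_eq_scale [l l0 hp].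
have := Qmap_Rpoint e2 e3 r; rewrite hp Qmap_scale Qmap_Rpoint.
rewrite /scale3 /= => -[hx hy hz].
have l2 : l ^+ 2 = 1 by apply: (mulIf al_neq0); rewrite mul1r.
rewrite l2 !mul1r in hy hz.
move: hy hz => /(signr_mulIf be_neq0) <- /(signr_mulIf ga_neq0) <- in hp *.
have := congr1 (fun p => (p.1.1 + p.2) ^+ 2) hp.
rewrite /scale3 -mulrDr /Rpoint !Qsection_sum exprMn l2 mul1r !sqrtCK /=.
have two_neq0 : (2 : C) != 0 by rewrite pnatr_eq0.
move=> /addrI /(mulfI two_neq0) /signr_mulIf -> //.
by rewrite sqrtC_eq0 signed_det_neq0.
Qed.

Lemma Rmap_fiber_Rpoint p : in_fiber Rmap (al ^+ 2, be ^+ 2, ga ^+ 2) p ->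
  exists t, proj_eq p (Rpoint t).
Proof.
move=> [_ [_ /proj_eq_scale [la la0]]]; rewrite Rmap_sqr3.
case hQ : (Qmap p) => [[x y] z] [hx hy hz].
have x0 : x != 0 by rewrite -sqrf_eq0 hx mulf_neq0 ?expf_neq0.
pose mu := x / al; have mu0 : mu != 0 by rewrite mulf_neq0 ?invr_eq0.
have la_mu : la = mu ^+ 2.
  by apply: (mulIf (expf_neq0 2 al_neq0)); rewrite -hx -exprMn divfK.
have [e2 ey] : exists e2 : bool, y = (-1) ^+ e2 * (mu * be).
  by apply: sqr_eq_sign; rewrite hy la_mu -exprMn.
have [e3 ez] : exists e3 : bool, z = (-1) ^+ e3 * (mu * ga).
  by apply: sqr_eq_sign; rewrite hz la_mu -exprMn.
pose nu := sqrtC mu; have nu0 : nu != 0 by rewrite sqrtC_eq0.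
have hQ' : Qmap (scale3 nu^-1 p) = (al, (-1) ^+ e2 * be, (-1) ^+ e3 * ga).
  rewrite Qmap_scale hQ ey ez /scale3 /= exprVn sqrtCK /mu.
  by congr (_, _, _); field; rewrite ?nu0 ?al_neq0.
have [r [e hp]] := Qmap_eq_Qroot (signed_be_neq0 e2)
  (signed_disc_neq0 e2 e3) hQ'.
exists (e2, e3, r); apply/proj_eq_scale; exists (nu * (-1) ^+ e).
  by rewrite mulf_neq0 ?signr_eq0.
by rewrite -scale3M -hp scale3K.
Qed.

End RmapFiber.

Definition Gmap (p : C3) : C3 :=
  let: (A, B, D) := p in
  (A * (A + B) ^+ 2, B * (A + D) ^+ 2, (A + B) * (A * B + D ^+ 2)).

Lemma calRmap_sqr3 p : calRmap p = Gmap (sqr3 p).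
Proof. by case: p => [[Z T] Y]; rewrite /sqr3 /=; congr (_, _, _); ring. Qed.

Lemma calRmap_scale l p : calRmap (scale3 l p) = scale3 (l ^+ 6) (calRmap p).
Proof. by case: p => [[Z T] Y]; rewrite /scale3 /=; congr (_, _, _); ring. Qed.

(* [calRmap] sends the line [Y = 0] into a conic, which misses generic points. *)
Lemma calRmap_infinity Z T x y z : calRmap (Z, T, 0) = (x, y, z) ->
  z ^+ 2 - x * z + x * y = 0.
Proof. by move=> [<- <- <-]; ring. Qed.

Section GmapFiber.

Variables a b c : C.

(* Over [(a, b, c)], the affine chart [D = 1] of [Gmap] is cut out by
   [quadG A = 0] and [B = rootB A]. *)
Definition leadG := a * b - a * c + c ^+ 2.
Definition discG := a ^+ 2 * b ^+ 2 - leadG * (a * (a + b - c)).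
Definition quadG (A : C) := leadG * A ^+ 2 - 2 * (a * b) * A + a * (a + b - c).
Definition rootA (r : bool) := (a * b + (-1) ^+ r * sqrtC discG) / leadG.
Definition rootB (A : C) := (c * A ^+ 2 - a) / (A * (a - c)).

Hypotheses (a_neq0 : a != 0) (b_neq0 : b != 0) (c_neq0 : c != 0).
Hypothesis ac_neq0 : a - c != 0.
Hypothesis lead_neq0 : leadG != 0.
Hypothesis disc_neq0 : discG != 0.
Hypothesis quad_m1_neq0 : (a - c) ^+ 2 + 4 * a * b != 0.
Hypothesis quad_0_neq0 : a * (a + b - c) != 0.

Lemma quadG_rootA r : quadG (rootA r) = 0.
Proof.
rewrite /quadG /rootA; have := sqrtCK discG; rewrite /discG.
set w := sqrtC _ => w2; apply: (mulfI lead_neq0); rewrite mulr0.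
have -> : leadG * (leadG * ((a * b + (-1) ^+ r * w) / leadG) ^+ 2 -
    2 * (a * b) * ((a * b + (-1) ^+ r * w) / leadG) + a * (a + b - c))
  = ((-1) ^+ r) ^+ 2 * w ^+ 2 - (a ^+ 2 * b ^+ 2 - leadG * (a * (a + b - c))).
  by field.
by rewrite sqrr_sign mul1r w2 subrr.
Qed.

Lemma quadG_eq0 A : quadG A = 0 -> exists r, A = rootA r.
Proof.
move=> hq; have [r hr] : exists r : bool, leadG * A - a * b = (-1) ^+ r * sqrtC discG.
  apply: sqr_eq_sign_sqrt; rewrite /discG.
  have -> : (leadG * A - a * b) ^+ 2 =
      leadG * quadG A + (a ^+ 2 * b ^+ 2 - leadG * (a * (a + b - c))).
    by rewrite /quadG; ring.
  by rewrite hq mulr0 add0r.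
by exists r; rewrite /rootA -hr; field.
Qed.

Lemma rootA_inj : injective rootA.
Proof.
move=> r r'; rewrite /rootA => /(mulIf (invr_neq0 lead_neq0)) /addrI.
by move/signr_mulIf; apply; rewrite sqrtC_eq0.
Qed.

Lemma quadG0 : quadG 0 = a * (a + b - c).
Proof. by rewrite /quadG; ring. Qed.

Lemma quadG1 : quadG 1 = (a - c) ^+ 2.
Proof. by rewrite /quadG /leadG; ring. Qed.

Lemma quadGN1 : quadG (-1) = (a - c) ^+ 2 + 4 * a * b.
Proof. by rewrite /quadG /leadG; ring. Qed.

Section Root.

Variable A : C.
Hypothesis quad_eq0 : quadG A = 0.

Lemma quadG_root_neq0 : A != 0.
Proof.
by apply: contraNneq quad_0_neq0 => A0; rewrite -quadG0 -[X in quadG X]A0 quad_eq0.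
Qed.

Lemma quadG_root_neq1 : A != 1.
Proof.
apply: contraNneq (expf_neq0 2 ac_neq0) => A1.
by rewrite -quadG1 -[X in quadG X]A1 quad_eq0.
Qed.

Lemma quadG_root_neqN1 : A != -1.
Proof.
by apply: contraNneq quad_m1_neq0 => A1; rewrite -quadGN1 -[X in quadG X]A1 quad_eq0.
Qed.

Lemma rootB_neq0 : rootB A != 0.
Proof.
have A0 := quadG_root_neq0.
apply/eqP => hB; have hn : c * A ^+ 2 - a = 0.
  have : rootB A * (A * (a - c)) = c * A ^+ 2 - a by rewrite divfK // mulf_neq0.
  by rewrite hB mul0r.
have E : a * b * (a + c - 2 * c * A) = 0.
  by rewrite -[RHS](_ : c * quadG A - leadG * (c * A ^+ 2 - a) = 0);
    [rewrite /quadG /leadG; ring | rewrite quad_eq0 hn !mulr0 subrr].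
move/eqP: E; rewrite !mulf_eq0 (negbTE a_neq0) (negbTE b_neq0) /= => /eqP E.
suff : (a - c) ^+ 2 = 0 by move/eqP; rewrite expf_eq0 (negbTE ac_neq0).
have -> : (a - c) ^+ 2 = (a + c - 2 * c * A) * (a + c + 2 * c * A) +
    4 * c * (c * A ^+ 2 - a) by ring.
by rewrite E hn mul0r mulr0 addr0.
Qed.

Definition scaleG := a * ((A - 1) * (A + 1)) ^+ 2 / (A * (a - c) ^+ 2).

Lemma scaleG_neq0 : scaleG != 0.
Proof.
have A1 : A - 1 != 0 by rewrite subr_eq0 quadG_root_neq1.
have AN1 : A + 1 != 0 by rewrite addr_eq0 quadG_root_neqN1.
by rewrite /scaleG !mulf_neq0 ?invr_neq0 ?mulf_neq0 ?expf_neq0 ?quadG_root_neq0.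
Qed.

Lemma Gmap_rootB : Gmap (A, rootB A, 1) = scale3 scaleG (a, b, c).
Proof.
have A0 := quadG_root_neq0.
rewrite /Gmap /scale3 /scaleG /rootB /= expr1n; congr (_, _, _).
- by field; rewrite ?ac_neq0 ?A0.
- apply/eqP; rewrite -subr_eq0; apply/eqP.
  rewrite -[RHS](_ : - ((A + 1) ^+ 2 * quadG A / (A * (a - c) ^+ 2)) = 0).
    by rewrite /quadG /leadG; field; rewrite ?ac_neq0 ?A0.
  by rewrite quad_eq0 mulr0 mul0r oppr0.
- by field; rewrite ?ac_neq0 ?A0.
Qed.

End Root.

Lemma Gmap_fiber A B l : l != 0 -> Gmap (A, B, 1) = scale3 l (a, b, c) ->
  quadG A = 0 /\ B = rootB A.
Proof.
move=> l0 [h1 h2 h3]; rewrite expr1n in h2 h3.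
have A0 : A != 0.
  by apply: contraNneq (mulf_neq0 l0 a_neq0) => A0; rewrite -h1 A0 mul0r.
have AB0 : A + B != 0.
  by apply: contraNneq (mulf_neq0 l0 c_neq0) => AB0; rewrite -h3 AB0 mul0r.
have Am1 : A + 1 != 0.
  by apply: contraNneq (mulf_neq0 l0 b_neq0) => A1; rewrite -h2 A1 expr0n mulr0.
have E1 : c * A * (A + B) = a * (A * B + 1).
  apply: (mulIf AB0); rewrite (_ : c * A * (A + B) * (A + B) = c * (A * (A + B) ^+ 2));
    last by ring.
  by rewrite h1 -[RHS]mulrA [_ * (A + B)]mulrC h3; ring.
have hB : B = rootB A.
  rewrite /rootB; apply: (mulIf (mulf_neq0 A0 ac_neq0)); rewrite divfK ?mulf_neq0 //.
  have -> : c * A ^+ 2 - a =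
      B * (A * (a - c)) + (c * A * (A + B) - a * (A * B + 1)) by ring.
  by rewrite E1 subrr addr0.
split=> //; apply/eqP; move: Am1 (mulf_neq0 A0 (expf_neq0 2 ac_neq0)).
have : B * (A + 1) ^+ 2 - (A + B) * (A * B + 1) / c * b = 0 by rewrite h2 h3; field.
rewrite [in X in X -> _]hB /rootB => E2 Am1 den0.
have : (A + 1) ^+ 2 * quadG A / (A * (a - c) ^+ 2) = 0.
  apply: oppr_inj; rewrite oppr0 -E2 /quadG /leadG.
  by field; rewrite ?c_neq0 ?ac_neq0 ?A0.
move/eqP; rewrite mulf_eq0 invr_eq0 (negbTE den0) orbF.
by rewrite mulf_eq0 sqrf_eq0 (negbTE Am1).
Qed.

Definition calRpoint (t : bool * bool * bool) : C3 :=
  let A := rootA t.1.1 in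
  ((-1) ^+ t.1.2 * sqrtC A, (-1) ^+ t.2 * sqrtC (rootB A), 1).

Lemma calRpoint_in_fiber t : in_fiber calRmap (a, b, c) (calRpoint t).
Proof.
have hq := quadG_rootA t.1.1.
have l0 := scaleG_neq0 hq.
have hR : calRmap (calRpoint t) = scale3 (scaleG (rootA t.1.1)) (a, b, c).
  rewrite calRmap_sqr3 -(Gmap_rootB hq).
  by rewrite /sqr3 /= !sign_sqrtCK !expr1n.
split; first by right; right; apply/eqP; rewrite oner_eq0.
split; first by rewrite hR; right; right; apply/eqP; rewrite mulf_neq0.
by rewrite hR; apply/proj_eq_scale; exists (scaleG (rootA t.1.1)).
Qed.

Lemma calRpoint_inj t t' : proj_eq (calRpoint t) (calRpoint t') -> t = t'.
Proof.
case: t t' => [[r eZ] eT] [[r' eZ'] eT'] /proj_eq_scale [l _].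
rewrite /calRpoint /scale3 /= mulr1 => -[hZ hT l1]; rewrite -l1 !mul1r in hZ hT.
have rr' : r = r'.
  by apply: rootA_inj; rewrite -[LHS](sign_sqrtCK eZ) hZ sign_sqrtCK.
subst r'; have hq := quadG_rootA r.
have A0 := quadG_root_neq0 hq.
have B0 := rootB_neq0 hq.
by rewrite (signr_mulIf _ hZ) ?(signr_mulIf _ hT) // sqrtC_eq0.
Qed.

Lemma calRmap_fiber_calRpoint p : in_fiber calRmap (a, b, c) p ->
  exists t, proj_eq p (calRpoint t).
Proof.
case: p => [[Z T] Y] [_ [_ /proj_eq_scale [l l0 hl]]].
have Y0 : Y != 0.
  apply: contra lead_neq0 => /eqP Y0.
  move: hl; rewrite Y0 /scale3 => /calRmap_infinity E.
  have : l ^+ 2 * leadG = 0 by rewrite -[RHS]E /leadG /=; ring.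
  by move/eqP; rewrite mulf_eq0 expf_eq0 (negbTE l0).
pose q := scale3 Y^-1 (Z, T, Y).
have hq : q = (Z / Y, T / Y, 1) by rewrite /q /scale3 /= mulVf // !(mulrC Y^-1).
have hG : Gmap (sqr3 q) = scale3 (l / Y ^+ 6) (a, b, c).
  by rewrite -calRmap_sqr3 /q calRmap_scale hl scale3M exprVn mulrC.
have hsq : sqr3 q = ((Z / Y) ^+ 2, (T / Y) ^+ 2, 1) by rewrite hq /sqr3 /= expr1n.
rewrite hsq in hG.
have [quad0 hB] := Gmap_fiber (mulf_neq0 l0 (invr_neq0 (expf_neq0 6 Y0))) hG.
have [r hr] := quadG_eq0 quad0.
have [eZ hZ] := sqr_eq_sign_sqrt hr.
have [eT hT] : exists eT : bool, T / Y = (-1) ^+ eT * sqrtC (rootB (rootA r)).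
  by apply: sqr_eq_sign_sqrt; rewrite -hr -hB.
exists (r, eZ, eT); apply/proj_eq_scale; exists Y => //.
by rewrite /scale3 /calRpoint /= -hZ -hT mulr1 !(mulrC Y) !divfK.
Qed.

End GmapFiber.

(* The genericity conditions, written over any commutative ring so that they
   commute with ring morphisms such as evaluation of multivariate polynomials. *)Definition Rgeneric (T : comNzRingType) (a b c : T) : T :=
  a * b * c * (a * c - b ^+ 2) * ((a + c + 4 * b) ^+ 2 - 4 * a * c).

Definition calRgeneric (T : comNzRingType) (a b c : T) : T :=
  a * b * c * (a - c) * (a * b - a * c + c ^+ 2) *
  (a ^+ 2 * b ^+ 2 - (a * b - a * c + c ^+ 2) * (a * (a + b - c))) *
  ((a - c) ^+ 2 + 4 * a * b) * (a * (a + b - c)).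

Lemma rmorph_Rgeneric (R S : comNzRingType) (f : {rmorphism R -> S}) a b c :
  f (Rgeneric a b c) = Rgeneric (f a) (f b) (f c).
Proof. by rewrite /Rgeneric !(rmorphXn, rmorph_nat, rmorphM, rmorphB, rmorphD). Qed.

Lemma rmorph_calRgeneric (R S : comNzRingType) (f : {rmorphism R -> S}) a b c :
  f (calRgeneric a b c) = calRgeneric (f a) (f b) (f c).
Proof. by rewrite /calRgeneric !(rmorphXn, rmorph_nat, rmorphM, rmorphB, rmorphD). Qed.

Section Generic.

Variable P : forall T : comNzRingType, T -> T -> T -> T.
Hypothesis rmorph_P : forall (R S : comNzRingType) (f : {rmorphism R -> S}) a b c,
  f (P a b c) = P (f a) (f b) (f c).

Definition genericP : {mpoly C[3]} := P 'X_(inord 0) 'X_(inord 1) 'X_(inord 2).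

Lemma meval_genericP q : meval (coords q) genericP = P q.1.1 q.1.2 q.2.
Proof. by rewrite /genericP rmorph_P /= !mevalXU /coords !inordK. Qed.

Lemma genericP_neq0 (a b c : int) : P a b c != 0 -> genericP != 0.
Proof.
move=> Pabc; apply: contraNneq Pabc => P0.
have := meval_genericP (a%:~R, b%:~R, c%:~R); rewrite P0 meval0 /=.
rewrite -(rmorph_P (intr : {rmorphism int -> C})) /= => /esym/eqP.
by rewrite intr_eq0.
Qed.

End Generic.

Lemma card_bool3 : #|{: bool * bool * bool}| = 8%N.
Proof. by rewrite !card_prod card_bool. Qed.

Lemma deg_top_Rmap : deg_top_eq Rmap 8.
Proof.
exists (genericP Rgeneric); split.
  exact: (@genericP_neq0 _ rmorph_Rgeneric 1 2 3).
case=> [[a b] c] _; rewrite (meval_genericP rmorph_Rgeneric) /Rgeneric /= -card_bool3.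
rewrite !mulf_eq0 !negb_or => /andP [/andP [/andP [/andP [a0 b0] c0] det0] disc0].
have [al [be [ga [ea eb ec]]]] :
    exists al be ga, [/\ a = al ^+ 2, b = be ^+ 2 & c = ga ^+ 2].
  by exists (sqrtC a), (sqrtC b), (sqrtC c); rewrite !sqrtCK.
subst a b c; rewrite !sqrf_eq0 in a0 b0 c0; rewrite -exprM in det0.
apply: fiber_card_param.
- exact: Rpoint_in_fiber.
- exact: Rpoint_inj.
- exact: Rmap_fiber_Rpoint.
Qed.

Lemma deg_top_calRmap : deg_top_eq calRmap 8.
Proof.
exists (genericP calRgeneric); split.
  exact: (@genericP_neq0 _ rmorph_calRgeneric 1 1 3).
case=> [[a b] c] _; rewrite (meval_genericP rmorph_calRgeneric) /calRgeneric /=.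
rewrite -card_bool3 !mulf_eq0 !negb_or.
move=> /and3P [/andP [/andP [/andP [/andP [/andP [/andP [a0 b0] c0] ac0]]]]].
move=> lead0 disc0 m10 _ abc0.
have q00 : a * (a + b - c) != 0 by rewrite mulf_neq0.
apply: fiber_card_param.
- exact: calRpoint_in_fiber.
- exact: calRpoint_inj.
- exact: calRmap_fiber_calRpoint.
Qed.

Theorem proposition4p3 : deg_top_eq Rmap 8 /\ deg_top_eq calRmap 8.
Proof. exact: (conj deg_top_Rmap deg_top_calRmap). Qed.
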